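(* Let $k,n,m$ be positive integers with $n+m\le k$ and let $q$ be a prime power. Let $\mathbb{T}$ be the set of $1$-dimensional subspaces of $\mathbb{F}_q^k$ and define $\mathbb{X}=\{\{T_1,\dots,T_n\}\subseteq\mathbb{T}: \dim(T_1+\cdots+T_n)=n\}$, $\mathbb{Y}=\{\{T_1,\dots,T_m\}\subseteq\mathbb{T}: \dim(T_1+\cdots+T_m)=m\}$, $\mathbb{Z}=\{\{T_1,\dots,T_{n+m}\}\subseteq\mathbb{T}: \dim(T_1+\cdots+T_{n+m})=n+m\}$. Let $B$ be the bipartite graph with left (user) vertex set $\mathbb{X}$, right (subfile) vertex set $\mathbb{Y}$, and $X\in\mathbb{X}$ adjacent to $Y\in\mathbb{Y}$ if and only if $X\cup Y\in\mathbb{Z}$. Then $B$ is a $(K,F,D)$ bipartite caching graph admitting an induced matching cover with $$S=\frac{1}{(n+m)!}\,q^{\frac{(n+m)(n+m-1)}{2}}\prod_{i=0}^{n+m-1}\binom{k-i}{1}_q$$ induced matchings, each having $g=\binom{n+m}{n}$ edges, and it defines a coded caching scheme (for $N\ge K$ files) with $$K=\frac{1}{n!}q^{\frac{n(n-1)}{2}}\prod_{i=0}^{n-1}\binom{k-i}{1}_q,\qquad F=\frac{1}{m!}q^{\frac{m(m-1)}{2}}\prod_{i=0}^{m-1}\binom{k-i}{1}_q,$$ $$\frac{M}{N}=1-q^{nm}\prod_{i=0}^{m-1}\frac{\binom{k-n-i}{1}_q}{\binom{k-i}{1}_q},\qquad R=\frac{m!\,q^{nm}}{(n+m)!}\,q^{\frac{n(n-1)}{2}}\prod_{i=0}^{n-1}\binom{k-m-i}{1}_q,$$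 and global caching gain $\gamma=\binom{n+m}{n}$.
   Context: $\binom{a}{1}_q=\frac{q^a-1}{q-1}$ is the number of $1$-dimensional subspaces of $\mathbb{F}_q^a$; $\binom{n+m}{n}$ is an ordinary binomial coefficient. Coded caching setup: a server holds $N$ files $W_1,\dots,W_N$ and is connected by an error-free broadcast link to $K$ users, each having a cache able to store $M$ files; it is assumed throughout that $N\ge K$. Each file is split into $F$ equal-size subfiles $W_{i,f}$, $f\in\mathcal{F}$, $|\mathcal{F}|=F$ ($F$ is the subpacketization). Caching is done before demands are known and is symmetric: for every user $k$ and index $f$, user $k$ caches either $W_{i,f}$ for all $i$ or for no $i$. In the delivery phase every user demands one file and the server broadcasts transmissions, each of the size of one subfile, so that every user can recover its demanded file from its cache and the transmissions, for every demand vector. The rate is $R=(\text{number of transmissions})/F$ and the global caching gain is $\gamma=K(1-M/N)/R$. A $(K,F,D)$ bipartite caching graph is a bipartite graph with $K$ left (user) vertices and $F$ right (subfile) vertices in which every left vertex has degree $D$; it defines the symmetric caching scheme in which user $k$ does not cache the subfiles with index $f$ exactly when $\{k,f\}$ is an edge (so $M/N=1-D/F$). An induced matching of a bipartite graph $B$ is a set $\mathcal{C}\subseteq E(B)$ such that for any two distinct edges $\{k_1,f_1\},\{k_2,f_2\}\in\mathcal{C}$ we have $k_1\ne k_2$, $f_1\ne f_2$ and $\{k_1,f_2\},\{k_2,f_1\}\notin E(B)$. An induced matching cover of $B$ is a set of induced matchings partitioning $E(B)$; each induced matching $\{\{k_i,f_i\}\}_i$ gives the transmission $\sum_i W_{d_{k_i},f_i}$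 where $W_{d_k}$ is the file demanded by user $k$. *)

From HB Require Import structures.
From mathcomp Require Import all_boot all_order all_algebra all_field.
Set Implicit Arguments. Unset Strict Implicit. Unset Printing Implicit Defensive.
Import Order.TTheory GRing.Theory Num.Theory.

Section Bipartite.
Variables (Lt Rt : finType).
Variables (VL : {set Lt}) (VR : {set Rt}) (adj : Lt -> Rt -> bool).

Definition bip_edges : {set Lt * Rt} :=
  [set e | (e.1 \in VL) && (e.2 \in VR) && adj e.1 e.2].

Definition left_degree (x : Lt) : nat := #|[set y in VR | adj x y]|.

Definition caching_graph (K F D : nat) : Prop :=
  #|VL| = K /\ #|VR| = F /\ forall x, x \in VL -> left_degree x = D.

Definition induced_matching (C : {set Lt * Rt}) : Prop :=
  C \subset bip_edges /\
  forall e1 e2, e1 \in C -> e2 \in C -> e1 != e2 ->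
    [/\ e1.1 != e2.1, e1.2 != e2.2,
        (e1.1, e2.2) \notin bip_edges & (e2.1, e1.2) \notin bip_edges].

Definition induced_matching_cover (P : {set {set Lt * Rt}}) : Prop :=
  partition P bip_edges /\ forall C, C \in P -> induced_matching C.
End Bipartite.

(* A subspace of F^k is represented by the canonical square matrix <<A>>%MS
   whose row space it is. *)
Definition one_dim_subspaces (F : finFieldType) (k : nat) : {set 'M[F]_k} :=
  [set U : 'M[F]_k | (<<U>>%MS == U) && (\rank U == 1%N)].

Definition indep_lines (F : finFieldType) (k r : nat) : {set {set 'M[F]_k}} :=
  [set A : {set 'M[F]_k} | [&& A \subset one_dim_subspaces F k, #|A| == r &
                              \rank (\sum_(U in A) U)%MS == r]].

Local Open Scope ring_scope.
Definition qint (q a : nat) : rat := ((q%:R ^+ a - 1) / (q%:R - 1)).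

From HB Require Import structures.
From mathcomp Require Import all_boot all_order all_algebra all_field.
From mathcomp Require Import zify ring.
Import Order.TTheory GRing.Theory Num.Theory.
Set Implicit Arguments. Unset Strict Implicit. Unset Printing Implicit Defensive.

(* If X and Y are adjacent then |X :|: Y| = n + m forces X and Y to be disjoint,
   so every edge is a split of some W in Z into an n-subset and its complement;
   conversely every such split is an edge, as subsets of independent lines are
   independent.  Grouping the edges by W gives |Z| classes of 'C(n + m, n)
   edges, and each class is an induced matching: for distinct n-subsets X1, X2
   of W, the set X1 :|: (W :\: X2) has fewer than n + m lines.
   The numbers K, F, D and |Z| all count r-sets of lines that stay independent
   modulo a fixed s-dimensional subspace: adding the lines one at a time and
   counting each set once per member shows that r! (q - 1)^r times this number
   is \prod_(i < r) (q^k - q^(s + i)). *)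

Lemma double_count (I J : finType) (A : {set I}) (B : {set J}) (R : I -> J -> bool) :
  \sum_(i in A) #|[set j in B | R i j]| = \sum_(j in B) #|[set i in A | R i j]|.
Proof.
transitivity (\sum_(i in A) \sum_(j in B | R i j) 1).
  by apply: eq_bigr => i _; rewrite -sum1_card; apply: eq_bigl => j; rewrite inE.
rewrite (exchange_big_dep (mem B)) /=; last by move=> i j _ /andP[].
apply: eq_bigr => j jB; rewrite -sum1_card; apply: eq_bigl => i.
by rewrite inE jB.
Qed.

Lemma setUD_sub (T : finType) (A B : {set T}) : A \subset B -> A :|: (B :\: A) = B.
Proof.
move=> sAB; apply/setP => u; rewrite !inE.
by case: (boolP (u \in A)) => // /(subsetP sAB).
Qed.

Lemma setDD_sub (T : finType) (A B : {set T}) : A \subset B -> B :\: (B :\: A) = A.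
Proof. by move=> sAB; rewrite setDDr setDv set0U; apply/setIidPr. Qed.

Section SplitMatchings.
Variables (T : finType) (n m : nat) (X Y Z : {set {set T}}).
Implicit Types (W x y : {set T}) (e : {set T} * {set T}).
Hypothesis cardX : {in X, forall x, #|x| = n}.
Hypothesis cardY : {in Y, forall y, #|y| = m}.
Hypothesis cardZ : {in Z, forall W, #|W| = n + m}.
Hypothesis sub_memX : forall W x, W \in Z -> x \subset W -> #|x| = n -> x \in X.
Hypothesis sub_memY : forall W y, W \in Z -> y \subset W -> #|y| = m -> y \in Y.

Local Notation adj := (fun x y : {set T} => x :|: y \in Z).
Local Notation edges := (bip_edges X Y adj).

Lemma in_bip_edges e : (e \in edges) = [&& e.1 \in X, e.2 \in Y & e.1 :|: e.2 \in Z].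
Proof. by rewrite inE -andbA. Qed.

Definition split_matching (W : {set T}) : {set {set T} * {set T}} :=
  [set e : {set T} * {set T} | [&& e.1 \subset W, #|e.1| == n & e.2 == W :\: e.1]].

Lemma split_matching_union W e : e \in split_matching W -> e.1 :|: e.2 = W.
Proof. by rewrite inE => /and3P[sW _ /eqP ->]; apply: setUD_sub. Qed.

Lemma card_split_matching W : W \in Z -> #|split_matching W| = 'C(n + m, n).
Proof.
move=> WZ; rewrite -(cardZ WZ) -cards_draws.
have -> : split_matching W =
    (fun x => (x, W :\: x)) @: [set x : {set T} | x \subset W & #|x| == n].
  apply/setP => -[x y]; rewrite inE.
  apply/and3P/imsetP => /= [[sxW cx /eqP ->]|[x' + [-> ->]]].
    by exists x; rewrite ?inE ?sxW.
  by rewrite inE => /andP[sxW cx].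
by rewrite card_imset // => x1 x2 [].
Qed.

Lemma split_matching_neq0 W : W \in Z -> split_matching W != set0.
Proof. by move=> WZ; rewrite -card_gt0 card_split_matching // bin_gt0 leq_addr. Qed.

Lemma split_matching_sub_edges W : W \in Z -> split_matching W \subset edges.
Proof.
move=> WZ; apply/subsetP => e eW; rewrite in_bip_edges (split_matching_union eW) WZ andbT.
move: eW; rewrite inE => /and3P[sW /eqP ce /eqP ->].
rewrite (sub_memX WZ sW ce) (sub_memY WZ (subsetDl _ _)) //.
by rewrite cardsDS // cardZ // ce addKn.
Qed.

Lemma split_cross_notin_edges W x1 x2 : W \in Z -> x1 \subset W -> x2 \subset W ->
  #|x1| = n -> #|x2| = n -> x1 != x2 -> (x1, W :\: x2) \notin edges.
Proof.
move=> WZ s1W s2W c1 c2; apply: contraNN; rewrite in_bip_edges => /and3P[_ _ /= UZ].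
have sUW : x1 :|: (W :\: x2) \subset W by rewrite subUset s1W subsetDl.
have eUW : x1 :|: (W :\: x2) = W.
  by apply/eqP; rewrite eqEcard sUW (cardZ WZ) (cardZ UZ) leqnn.
have s21 : x2 \subset x1.
  apply/subsetP => u u2; have := subsetP s2W u u2.
  by rewrite -{1}eUW !inE u2 /= orbF.
by rewrite eq_sym eqEcard s21 c1 c2 /=.
Qed.

Lemma split_matching_induced W : W \in Z -> induced_matching X Y adj (split_matching W).
Proof.
move=> WZ; split; first exact: split_matching_sub_edges.
move=> [x1 y1] [x2 y2] e1 e2; rewrite !inE /= in e1 e2.
case/and3P: e1 => s1 /eqP c1 /eqP ->; case/and3P: e2 => s2 /eqP c2 /eqP -> ne12.
have nx : x1 != x2 by apply: contraNneq ne12 => ->.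
split => //; last by apply: split_cross_notin_edges; rewrite // eq_sym.
- by apply: contraNneq nx => /= eD; rewrite -(setDD_sub s1) eD setDD_sub.
- exact: split_cross_notin_edges.
Qed.

Lemma edge_in_split_matching e : e \in edges -> e \in split_matching (e.1 :|: e.2).
Proof.
rewrite in_bip_edges => /and3P[e1X e2Y UZ].
have : #|e.1 :|: e.2| == #|e.1| + #|e.2| by rewrite cardZ // cardX // cardY.
rewrite (leq_card_setU e.1 e.2) => dis12.
rewrite inE subsetUl cardX // eqxx setDUl setDv set0U.
by rewrite eq_sym; apply/eqP/setDidPl; rewrite disjoint_sym.
Qed.

Lemma split_matching_cover : induced_matching_cover X Y adj (split_matching @: Z).
Proof.
split; last by move=> _ /imsetP[W WZ ->]; apply: split_matching_induced.
apply/and3P; split.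
- rewrite eqEsubset; apply/andP; split.
    by apply/bigcupsP => _ /imsetP[W WZ ->]; apply: split_matching_sub_edges.
  apply/subsetP => e eE; apply/bigcupP; exists (split_matching (e.1 :|: e.2)).
    by apply: imset_f; move: eE; rewrite in_bip_edges => /and3P[].
  exact: edge_in_split_matching.
- apply/trivIsetP => _ _ /imsetP[W1 _ ->] /imsetP[W2 _ ->] neqW.
  rewrite -setI_eq0; apply: contraNT neqW => /set0Pn[e /setIP[e1 e2]].
  by rewrite -(split_matching_union e1) -(split_matching_union e2).
- by apply/imsetP => -[W WZ /esym/eqP]; apply/negP; apply: split_matching_neq0.
Qed.

Lemma card_split_matchings : #|split_matching @: Z| = #|Z|.
Proof.
apply: card_in_imset => W1 W2 W1Z _ eqW.
have /set0Pn[e e1] := split_matching_neq0 W1Z; have e2 : e \in split_matching W2 by rewrite -eqW.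
by rewrite -(split_matching_union e1) -(split_matching_union e2).
Qed.

End SplitMatchings.

Section Lines.
Variables (F : finFieldType) (k : nat).
Local Notation q := #|F|.
Local Notation lines := (one_dim_subspaces F k).
Implicit Types (U V W : 'M[F]_k) (A x y : {set 'M[F]_k}).

Lemma card_submx_rV p (M : 'M[F]_(p, k)) :
  #|[set v : 'rV[F]_k | (v <= M)%MS]| = q ^ \rank M.
Proof.
have -> : [set v : 'rV[F]_k | (v <= M)%MS] = (mulmx^~ (row_base M)) @: setT.
  apply/setP => v; rewrite inE; apply/idP/imsetP.
    by rewrite -(eq_row_base M) => /submxP[u ->]; exists u.
  by case=> u _ ->; rewrite -(eq_row_base M) submxMl.
by rewrite card_imset ?cardsT ?card_mx ?mul1n //; apply/row_free_inj/row_base_free.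
Qed.

Lemma card_nz_submx_rV p (M : 'M[F]_(p, k)) :
  #|[set v : 'rV[F]_k | (v <= M)%MS & v != 0%R]| + 1 = q ^ \rank M.
Proof.
rewrite -card_submx_rV [in RHS](cardsD1 0%R) inE sub0mx addnC; congr (_ + _).
by apply: eq_card => v; rewrite !inE andbC.
Qed.

Lemma rank_line U : U \in lines -> \rank U = 1.
Proof. by rewrite inE => /andP[_ /eqP]. Qed.

Lemma genmx_line (v : 'rV[F]_k) : v != 0%R -> <<v>>%MS \in lines.
Proof. by move=> nz_v; rewrite inE genmx_id eqxx mxrank_gen rank_rV nz_v. Qed.

Lemma genmx_rV_line U (v : 'rV[F]_k) :
  U \in lines -> v != 0%R -> (v <= U)%MS -> <<v>>%MS = U.
Proof.
move=> UL nz_v svU; have:= UL; rewrite inE => /andP[/eqP {2}<- _].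
by apply/eq_genmx/eqmxP; rewrite -(mxrank_leqif_eq svU) rank_rV nz_v rank_line.
Qed.

Lemma card_lines_sub p (M : 'M[F]_(p, k)) :
  #|[set U in lines | (U <= M)%MS]| * q.-1 + 1 = q ^ \rank M.
Proof.
rewrite -card_nz_submx_rV; congr (_ + 1); apply/esym; rewrite -sum1_card.
rewrite (partition_big (fun v => <<v>>%MS) (mem [set U in lines | (U <= M)%MS])) /=.
  rewrite -sum_nat_const; apply: eq_bigr => U; rewrite inE => /andP[UL sUM].
  have := card_nz_submx_rV U; rewrite rank_line // expn1 => <-; rewrite addn1 -sum1_card.
  apply: eq_bigl => v; rewrite !inE; apply/andP/andP => [[/andP[_ nz_v] /eqP <-]|[svU nz_v]].
    by rewrite genmxE.
  by rewrite (genmx_rV_line UL nz_v svU) (submx_trans svU sUM).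
move=> v; rewrite in_set => /andP[svM nz_v].
by rewrite in_set genmx_line // genmxE.
Qed.

Lemma card_lines_notsub p (M : 'M[F]_(p, k)) :
  #|[set U in lines | ~~ (U <= M)%MS]| * q.-1 = q ^ k - q ^ \rank M.
Proof.
have all_lines : [set U in lines | (U <= 1%:M%R)%MS] = lines.
  by apply/setP => U; rewrite !inE submx1 andbT.
have := card_lines_sub (1%:M%R : 'M[F]_k); rewrite all_lines mxrank1.
rewrite -(cardsID [set U | (U <= M)%MS] lines) -(card_lines_sub M) mulnDl.
have -> : lines :&: [set U | (U <= M)%MS] = [set U in lines | (U <= M)%MS].
  by apply/setP => U; rewrite !inE.
have -> : lines :\: [set U | (U <= M)%MS] = [set U in lines | ~~ (U <= M)%MS].
  by apply/setP => U; rewrite !inE andbC.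
by move=> <-; rewrite addnAC addKn.
Qed.

Lemma rank_sum_lines A : A \subset lines -> \rank (\sum_(U in A) U)%MS <= #|A|.
Proof.
move=> sAL; rewrite -sum1_card.
apply: (big_ind2 (fun (S : 'M[F]_k) r => \rank S <= r)) => [|S1 r1 S2 r2 le1 le2|U UA].
- by rewrite mxrank0.
- exact: leq_trans (mxrank_adds_leqif S1 S2) (leq_add le1 le2).
- by rewrite rank_line // (subsetP sAL).
Qed.

Lemma rank_adds_line W U : U \in lines -> \rank (W + U)%MS = \rank W + ~~ (U <= W)%MS.
Proof.
move=> UL; have [/addsmx_idPl -> | nUW] := boolP (U <= W)%MS; first by rewrite addn0.
have cap_lt : \rank (W :&: U)%MS < \rank U.
  by rewrite (ltn_leqif (mxrank_leqif_eq (capmxSr W U))) capmxSr sub_capmx (negbTE nUW).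
move: cap_lt (mxrank_sum_cap W U); rewrite (rank_line UL) ltnS leqn0 => /eqP ->.
by rewrite addn0.
Qed.

Definition adjoin V A : 'M[F]_k := (V + \sum_(U in A) U)%MS.

Definition indep_over V (r : nat) : {set {set 'M[F]_k}} :=
  [set A : {set 'M[F]_k} | [&& A \subset lines, #|A| == r & \rank (adjoin V A) == \rank V + r]].

Lemma indep_lines_over0 r : indep_lines F k r = indep_over 0 r.
Proof. by apply/setP => A; rewrite !inE /adjoin adds0mx mxrank0 add0n. Qed.

Lemma sub_adjoin V A U : U \in A -> (U <= adjoin V A)%MS.
Proof. by move=> UA; apply: submx_trans (addsmxSr V _); apply: (sumsmx_sup U). Qed.

Lemma adjoinU1 V A U : U \notin A -> adjoin V (U |: A) = (adjoin V A + U)%MS.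
Proof. by move=> nUA; rewrite /adjoin big_setU1 //= [(U + _)%MS]addsmxC addsmxA. Qed.

Lemma rank_adjoin_le V A : A \subset lines -> \rank (adjoin V A) <= \rank V + #|A|.
Proof.
move=> sAL; apply: leq_trans (mxrank_adds_leqif _ _) _.
by rewrite leq_add2l rank_sum_lines.
Qed.

Lemma indep_overS_mem V r U : U \in lines ->
  [set A in indep_over V r.+1 | U \in A] =
  (fun A => U |: A) @: [set A in indep_over V r | ~~ (U <= adjoin V A)%MS].
Proof.
move=> UL; apply/setP => A'; rewrite !inE; apply/idP/imsetP.
- case/andP => /and3P[sA'L /eqP cA' /eqP rA'] UA'.
  exists (A' :\ U); last by rewrite setD1K.
  have nUA : U \notin A' :\ U by rewrite !inE eqxx.
  have sAL : A' :\ U \subset lines := subset_trans (subsetDl _ _) sA'L.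
  have cA : #|A' :\ U| = r by move: cA'; rewrite (cardsD1 U) UA' => -[].
  have := rank_adjoin_le V sAL; rewrite cA.
  move: rA'; rewrite -{1}(setD1K UA') adjoinU1 // rank_adds_line // !inE sAL cA eqxx /=.
  case: (U <= _)%MS; rewrite /= ?addn0 ?addn1 ?andbT => eq_r le_r.
    by rewrite eq_r addnS ltnn in le_r.
  by rewrite addnS in eq_r; case: eq_r => ->.
- case=> A; rewrite !inE => /andP[/and3P[sAL /eqP cA /eqP rA] nU] ->.
  have nUA : U \notin A by apply: contra nU; apply: sub_adjoin.
  rewrite setU11 andbT subUset sub1set UL sAL cardsU1 nUA cA adjoinU1 //.
  by rewrite rank_adds_line // rA nU /= add1n addn1 addnS !eqxx.
Qed.

Lemma card_indep_overS V r :
  #|indep_over V r.+1| * r.+1 * q.-1 = #|indep_over V r| * (q ^ k - q ^ (\rank V + r)).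
Proof.
have count_extensions : #|indep_over V r.+1| * r.+1 =
    \sum_(A in indep_over V r) #|[set U in lines | ~~ (U <= adjoin V A)%MS]|.
  rewrite double_count -sum_nat_const.
  transitivity (\sum_(A in indep_over V r.+1) #|[set U in lines | U \in A]|).
    apply: eq_bigr => A; rewrite inE => /and3P[sAL /eqP <- _].
    by apply: eq_card => U; rewrite inE andb_idl //; apply: (subsetP sAL).
  rewrite double_count; apply: eq_bigr => U UL; rewrite indep_overS_mem //.
  apply: card_in_imset => A1 A2; rewrite !inE => /andP[_ nU1] /andP[_ nU2] eqU.
  have nUA1 : U \notin A1 by apply: contra nU1; apply: sub_adjoin.
  have nUA2 : U \notin A2 by apply: contra nU2; apply: sub_adjoin.
  by rewrite -(setU1K nUA1) eqU setU1K.
rewrite count_extensions big_distrl /= -sum_nat_const; apply: eq_bigr => A.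
by rewrite inE card_lines_notsub => /and3P[_ _ /eqP ->].
Qed.

Lemma card_indep_over V r :
  #|indep_over V r| * r`! * q.-1 ^ r = \prod_(i < r) (q ^ k - q ^ (\rank V + i)).
Proof.
elim: r => [|r IHr].
  rewrite big_ord0 fact0 expn0 !muln1; apply/eqP/cards1P; exists set0.
  apply/setP => A; rewrite !inE addn0 cards_eq0.
  by case: eqP => [->|]; rewrite ?andbF // sub0set /adjoin big_set0 addsmx0 eqxx.
rewrite big_ord_recr /= -IHr factS expnS.
transitivity (#|indep_over V r.+1| * r.+1 * q.-1 * (r`! * q.-1 ^ r)); first ring.
by rewrite card_indep_overS; ring.
Qed.

Lemma card_indep_over_rank V1 V2 r :
  \rank V1 = \rank V2 -> #|indep_over V1 r| = #|indep_over V2 r|.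
Proof.
move=> eq_rank; have pos : 0 < r`! * q.-1 ^ r.
  by rewrite muln_gt0 fact_gt0 expn_gt0 -subn1 subn_gt0 card_finNzRing_gt1.
by apply/eqP; rewrite -(eqn_pmul2r pos) !mulnA !card_indep_over eq_rank.
Qed.

Lemma adjoin_sum_setU x y :
  (\sum_(U in x :|: y) U :=: adjoin (\sum_(U in x) U)%MS y)%MS.
Proof.
apply/eqmxP/andP; split.
  apply/sumsmx_subP => U; rewrite inE => /orP[Ux|Uy]; last exact: sub_adjoin.
  by apply: submx_trans (addsmxSl _ _); apply: (sumsmx_sup U).
rewrite addsmx_sub; apply/andP; split; apply/sumsmx_subP => U UA;
  by apply: (sumsmx_sup U) => //; rewrite inE UA ?orbT.
Qed.

Lemma card_indep_lines r : {in indep_lines F k r, forall A, #|A| = r}.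
Proof. by move=> A; rewrite inE => /and3P[_ /eqP]. Qed.

Lemma rank_indep_lines r : {in indep_lines F k r, forall A, \rank (\sum_(U in A) U)%MS = r}.
Proof. by move=> A; rewrite inE => /and3P[_ _ /eqP]. Qed.

Lemma indep_lines_sub r s A x :
  A \in indep_lines F k r -> x \subset A -> #|x| = s -> x \in indep_lines F k s.
Proof.
rewrite !inE => /and3P[sAL /eqP cA /eqP rA] sxA <-.
have sxL := subset_trans sxA sAL.
rewrite sxL eqxx eqn_leq rank_sum_lines //=.
have := rank_adjoin_le (\sum_(U in x) U)%MS (subset_trans (subsetDl A x) sAL).
rewrite -adjoin_sum_setU setUD_sub // rA -cA cardsDS // => le_A.
by rewrite -(leq_add2r (#|A| - #|x|)) subnKC // subset_leq_card.
Qed.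

Lemma adj_indep_lines n m x : x \in indep_lines F k n ->
  [set y in indep_lines F k m | x :|: y \in indep_lines F k (n + m)] =
  indep_over (\sum_(U in x) U)%MS m.
Proof.
rewrite inE => /and3P[sxL /eqP cx /eqP rx]; apply/setP => y; rewrite !inE.
apply/idP/idP => [/andP[/and3P[syL /eqP cy _] /and3P[_ _ /eqP rxy]]|].
  by rewrite syL cy rx -adjoin_sum_setU rxy !eqxx.
case/and3P => syL /eqP cy /eqP rxy.
have sxyL : x :|: y \subset lines by rewrite subUset sxL syL.
rewrite -adjoin_sum_setU rx in rxy.
have [le_sum _] := mxrank_adds_leqif (\sum_(U in x) U)%MS (\sum_(U in y) U)%MS.
rewrite -adjoin_sum_setU rxy rx in le_sum.
have [le_cup _] := leq_card_setU x y.
have := rank_sum_lines syL; have := rank_sum_lines sxyL.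
rewrite syL sxyL cy rxy !eqxx /= => le_xy le_y.
have -> : \rank (\sum_(U in y) U)%MS = m.
  by apply/eqP; rewrite eqn_leq le_y -(leq_add2l n).
by rewrite eqxx eqn_leq le_xy -{1}cx -cy le_cup.
Qed.

End Lines.

Lemma sum_addn_ord s r : (\sum_(i < r) (s + i) = s * r + 'C(r, 2))%N.
Proof.
by rewrite big_split /= sum_nat_const card_ord mulnC -bin2_sum big_mkord.
Qed.

Lemma bin2D a b : 'C(a + b, 2) = ('C(a, 2) + a * b + 'C(b, 2))%N.
Proof.
rewrite -bin2_sum big_mkord big_split_ord /= sum_addn_ord -!bin2_sum !big_mkord.
by rewrite addnA.
Qed.

Lemma natr_fact_neq0 (R : numDomainType) r : ((r`!)%:R != 0 :> R)%R.
Proof. by rewrite pnatr_eq0 -lt0n fact_gt0. Qed.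

Section QNumerics.
Variable q : nat.
Hypothesis q_gt1 : (1 < q)%N.
Local Open Scope ring_scope.
Local Notation Q := (q%:R : rat).

Lemma qint_prod_split k a b :
  \prod_(i < a + b) qint q (k - i) =
  \prod_(i < a) qint q (k - i) * \prod_(i < b) qint q (k - a - i).
Proof. by rewrite big_split_ord /=; congr (_ * _); apply: eq_bigr => i _; rewrite subnDA. Qed.

Lemma natr_q_neq0 : Q != 0.
Proof. by rewrite pnatr_eq0 -lt0n ltnW. Qed.

Lemma natr_q_sub1_neq0 : Q - 1 != 0.
Proof. by rewrite subr_eq0 pnatr_eq1 neq_ltn q_gt1 orbT. Qed.

Lemma qint_neq0 a : (0 < a)%N -> qint q a != 0.
Proof.
move=> a_gt0; rewrite /qint mulf_neq0 ?invr_eq0 ?natr_q_sub1_neq0 //.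
by rewrite subr_eq0 -natrX pnatr_eq1 -(expn0 q) eqn_exp2l // -lt0n.
Qed.

Lemma natrB_expn b c : (b <= c)%N ->
  (q ^ c - q ^ b)%:R = Q ^+ b * (Q - 1) * qint q (c - b).
Proof.
move=> le_bc; rewrite natrB ?leq_pexp2l ?(ltnW q_gt1) // !natrX /qint.
by rewrite -mulrA (mulrC (Q - 1)) divfK ?natr_q_sub1_neq0 // mulrBr mulr1 -exprD subnKC.
Qed.

Definition indep_count (k s r : nat) : rat :=
  (r`!)%:R^-1 * Q ^+ (s * r + 'C(r, 2)) * \prod_(i < r) qint q (k - s - i).

Lemma prod_qint_neq0 k r : (r <= k)%N -> \prod_(i < r) qint q (k - i) != 0.
Proof. by move=> le_rk; apply/prodf_neq0 => i _; apply: qint_neq0; have := ltn_ord i; lia. Qed.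

Lemma indep_count0 k r :
  indep_count k 0 r = (r`!)%:R^-1 * Q ^+ 'C(r, 2) * \prod_(i < r) qint q (k - i).
Proof.
rewrite /indep_count mul0n add0n; congr (_ * _).
by apply: eq_bigr => i _; rewrite subn0.
Qed.

Lemma indep_count_ratio k n m : (m <= k)%N ->
  indep_count k n m / indep_count k 0 m =
  Q ^+ (n * m) * \prod_(i < m) (qint q (k - n - i) / qint q (k - i)).
Proof.
move=> le_mk; have Pm_neq0 := prod_qint_neq0 le_mk.
rewrite prodf_div indep_count0 /indep_count exprD.
by field; rewrite ?Pm_neq0 ?natr_fact_neq0 ?expf_neq0 ?natr_q_neq0.
Qed.

Lemma indep_count_add_ratio k n m : (n + m <= k)%N ->
  indep_count k 0 (n + m)%N / indep_count k 0 m =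
  (m`!)%:R * Q ^+ (n * m) / ((n + m)`!)%:R * Q ^+ 'C(n, 2) *
    \prod_(i < n) qint q (k - m - i).
Proof.
move=> le_k; have Pm_neq0 : \prod_(i < m) qint q (k - i) != 0.
  by apply: prod_qint_neq0; lia.
rewrite !indep_count0 [(n + m)%N]addnC qint_prod_split bin2D !exprD mulnC.
by field; rewrite ?Pm_neq0 ?natr_fact_neq0 ?expf_neq0 ?natr_q_neq0.
Qed.

Lemma indep_count_mul k n m :
  indep_count k 0 n * indep_count k n m = 'C(n + m, n)%:R * indep_count k 0 (n + m)%N.
Proof.
have := bin_fact (leq_addr m n); rewrite addKn => /(congr1 (fun t => t%:R : rat)).
rewrite !natrM => fact_nm.
rewrite !indep_count0 /indep_count qint_prod_split bin2D !exprD -fact_nm.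
have C_neq0 : 'C(n + m, n)%:R != 0 :> rat by rewrite pnatr_eq0 -lt0n bin_gt0 leq_addr.
by field; rewrite ?C_neq0 ?natr_fact_neq0.
Qed.

Lemma indep_count_neq0 k s r : (s + r <= k)%N -> indep_count k s r != 0.
Proof.
move=> le_k; rewrite /indep_count !mulf_neq0 ?invr_eq0 ?natr_fact_neq0 ?expf_neq0 ?natr_q_neq0 //.
by apply: prod_qint_neq0; lia.
Qed.

Lemma indep_count_gain k n m : (n + m <= k)%N ->
  indep_count k 0 n * (indep_count k n m / indep_count k 0 m) /
    (indep_count k 0 (n + m)%N / indep_count k 0 m) = 'C(n + m, n)%:R.
Proof.
move=> le_k; have Fs_neq0 : indep_count k 0 m != 0 by apply: indep_count_neq0; lia.
have S_neq0 : indep_count k 0 (n + m)%N != 0 by apply: indep_count_neq0.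
move: Fs_neq0 S_neq0 (indep_count_mul k n m).
move: (indep_count k 0 n) (indep_count k n m) (indep_count k 0 m) (indep_count k 0 (n + m)%N).
by move=> K D Fs S Fs_neq0 S_neq0 KD; rewrite invf_div !mulrA divfK // KD mulfK.
Qed.

End QNumerics.

Lemma card_indep_over_count (F : finFieldType) k (V : 'M[F]_k) r :
  (\rank V + r <= k)%N -> (#|indep_over V r|%:R = indep_count #|F| k (\rank V) r)%R.
Proof.
move=> le_k; have q_gt1 := card_finNzRing_gt1 F.
set Q := (#|F|%:R : rat); set s := \rank V.
have prod_eq : (\prod_(i < r) (#|F| ^ k - #|F| ^ (s + i))%:R =
    Q ^+ (s * r + 'C(r, 2)) * (Q - 1) ^+ r * \prod_(i < r) qint #|F| (k - s - i) :> rat)%R.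
  rewrite (eq_bigr (fun i : 'I_r => Q ^+ (s + i) * (Q - 1) * qint #|F| (k - s - i)))%R => [|i _].
    by rewrite !big_split /= prodrXr prodr_const card_ord sum_addn_ord.
  by rewrite natrB_expn // ?subnDA //; have := ltn_ord i; lia.
have := congr1 (fun t => t%:R : rat) (card_indep_over V r).
rewrite /= !natrM natrX natr_prod prod_eq -subn1 natrB 1?ltnW // /indep_count => eq_c.
have fn := natr_fact_neq0 rat r; have wn := expf_neq0 r (natr_q_sub1_neq0 q_gt1).
by apply: (mulIf wn); apply: (mulIf fn); rewrite mulrAC eq_c; field.
Qed.

Lemma card_indep_lines_count (F : finFieldType) k r :
  (r <= k)%N -> (#|indep_lines F k r|%:R = indep_count #|F| k 0 r)%R.
Proof. by move=> le_rk; rewrite indep_lines_over0 card_indep_over_count mxrank0. Qed.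

Section IndepLinesGraph.
Variables (F : finFieldType) (k n m : nat).
Local Notation X := (indep_lines F k n).
Local Notation Y := (indep_lines F k m).
Local Notation Z := (indep_lines F k (n + m)).
Local Notation adj := (fun x y : {set 'M[F]_k} => x :|: y \in Z).

Lemma left_degree_indep_lines (V : 'M[F]_k) :
  \rank V = n -> {in X, forall x, left_degree Y adj x = #|indep_over V m|}.
Proof.
move=> rankV x xX; rewrite /left_degree adj_indep_lines //.
by apply: card_indep_over_rank; rewrite (rank_indep_lines xX).
Qed.

Lemma indep_lines_split_cover : induced_matching_cover X Y adj (split_matching n @: Z).
Proof.
apply: split_matching_cover; try exact: card_indep_lines; exact: indep_lines_sub.
Qed.

End IndepLinesGraph.

Local Open Scope ring_scope.

Theorem theorem3 (F : finFieldType) (k n m : nat) :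
  (0 < k)%N -> (0 < n)%N -> (0 < m)%N -> (n + m <= k)%N ->
  let q := #|F| in
  let X := indep_lines F k n in
  let Y := indep_lines F k m in
  let Z := indep_lines F k (n + m) in
  let adj := fun (x y : {set 'M[F]_k}) => (x :|: y) \in Z in
  exists K Fs D : nat,
    caching_graph X Y adj K Fs D /\
    K%:Q = (n`!)%:R^-1 * q%:R ^+ ((n * n.-1) %/ 2) * \prod_(i < n) qint q (k - i) /\
    Fs%:Q = (m`!)%:R^-1 * q%:R ^+ ((m * m.-1) %/ 2) * \prod_(i < m) qint q (k - i) /\
    exists P : {set {set {set 'M[F]_k} * {set 'M[F]_k}}},
      induced_matching_cover X Y adj P /\
      #|P|%:Q = ((n + m)`!)%:R^-1 * q%:R ^+ (((n + m) * (n + m).-1) %/ 2)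
                  * \prod_(i < n + m) qint q (k - i) /\
      (forall C, C \in P -> #|C| = 'C(n + m, n)) /\
      let MN : rat := 1 - D%:R / Fs%:R in   (* M/N = 1 - D/F *)
      let R : rat := #|P|%:R / Fs%:R in     (* rate = #transmissions / F *)
      MN = 1 - q%:R ^+ (n * m) * \prod_(i < m) (qint q (k - n - i) / qint q (k - i)) /\
      R = (m`!)%:R * q%:R ^+ (n * m) / ((n + m)`!)%:R * q%:R ^+ ((n * n.-1) %/ 2)
            * \prod_(i < n) qint q (k - m - i) /\
      K%:R * (1 - MN) / R = ('C(n + m, n))%:R.
Proof.
move=> _ _ _ le_k; cbv zeta.
have le_nk : (n <= k)%N by lia.
have le_mk : (m <= k)%N by lia.
have q_gt1 := card_finNzRing_gt1 F.
have cardZ := @card_indep_lines F k (n + m).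
pose V : 'M[F]_k := pid_mx n.
have rankV : \rank V = n by rewrite rank_pid_mx.
have cardD : #|indep_over V m|%:R = indep_count #|F| k n m.
  by rewrite -rankV card_indep_over_count // rankV.
exists #|indep_lines F k n|, #|indep_lines F k m|, #|indep_over V m|.
split; first by do 2!split=> //; apply: left_degree_indep_lines.
rewrite -!pmulrn !card_indep_lines_count // cardD !divn2 -!bin2.
split; first by rewrite indep_count0.
split; first by rewrite indep_count0.
exists (split_matching n @: indep_lines F k (n + m)).
split; first exact: indep_lines_split_cover.
rewrite (card_split_matchings cardZ) -pmulrn card_indep_lines_count //.
split; first by rewrite indep_count0.
split; first by move=> _ /imsetP[W WZ ->]; apply: card_split_matching cardZ W WZ.
split; first by rewrite (indep_count_ratio q_gt1).
split; first by rewrite (indep_count_add_ratio q_gt1).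
by rewrite subKr indep_count_gain.
Qed.
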